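(* Let $G$ be a complete geometric graph and let $B$ be a blocker for $\mathcal{T}_{\leq 3}(G)$. Let $a$ be a leaf of $B$ with leaf edge $[a,b]$, let $l(a,b)^{+}$ be one of the two open sides of the line $l(a,b)$, and suppose $V(G)\cap l(a,b)^{+}\neq\emptyset$. Let $c\in V(G)\cap l(a,b)^{+}$ be the vertex for which the angle $\angle abc$ is maximal among all vertices in $l(a,b)^{+}$. Then $[b,c]\in E(B)$.
   Context: A geometric graph is a graph whose vertices are points in the plane in general position (no three collinear) and whose edges are straight segments between pairs of vertices; $G$ is complete if all pairs of vertices are joined. $l(a,b)$ is the line through $a$ and $b$. $\mathcal{T}_{\leq k}(G)$ denotes the family of all simple (non-crossing) spanning trees of $G$ of (graph) diameter at most $k$. A subgraph $B$ blocks a family $\mathcal{F}$ of subgraphs if it shares at least one edge with every member of $\mathcal{F}$; a blocker of $\mathcal{F}$ is a subgraph that blocks $\mathcal{F}$ and has the smallest possible number of edges among all subgraphs blocking $\mathcal{F}$. A leaf of $B$ is a vertex of degree 1 in $B$, and its leaf edge is the unique edge of $B$ containing it. *)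

From HB Require Import structures.
From mathcomp Require Import all_boot all_order all_algebra.
From mathcomp Require Import reals trigo.
Set Implicit Arguments. Unset Strict Implicit. Unset Printing Implicit Defensive.
Import Order.TTheory GRing.Theory Num.Theory.
Local Open Scope ring_scope.

Section Geo.
Variable R : realType.
Notation pt := (R * R)%type.

Definition orient (p q r : pt) : R :=
  (q.1 - p.1) * (r.2 - p.2) - (q.2 - p.2) * (r.1 - p.1).

Definition dot (u v : pt) : R := u.1 * v.1 + u.2 * v.2.
Definition vsub (u v : pt) : pt := (u.1 - v.1, u.2 - v.2).
Definition vnorm (u : pt) : R := Num.sqrt (dot u u).

Definition angle (p q r : pt) : R :=
  acos (dot (vsub p q) (vsub r q) / (vnorm (vsub p q) * vnorm (vsub r q))).

Definition seg_meet (p q r s : pt) : Prop :=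
  exists t u : R, [/\ 0 <= t <= 1, 0 <= u <= 1 &
    ((1 - t) * p.1 + t * q.1 = (1 - u) * r.1 + u * s.1 /\
     (1 - t) * p.2 + t * q.2 = (1 - u) * r.2 + u * s.2)].
End Geo.

Section Graphs.
Variable T : finType.

(* edges of the complete graph on T: the 2-element subsets *)
Definition is_edge (e : {set T}) : bool := #|e| == 2.

Definition adj (E : {set {set T}}) : rel T := fun x y => [set x; y] \in E.

Definition dist_le (E : {set {set T}}) (k : nat) (u v : T) : Prop :=
  exists s : seq T, (size s <= k)%N /\ path (adj E) u s /\ last u s = v.

Definition connected_es (E : {set {set T}}) : Prop :=
  forall u v : T, exists s : seq T, path (adj E) u s /\ last u s = v.

Definition has_cycle (E : {set {set T}}) : Prop :=
  exists (x : T) (s : seq T), [/\ uniq (x :: s), (2 <= size s)%N,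
    path (adj E) x s & adj E (last x s) x].

Definition spanning_tree (E : {set {set T}}) : Prop :=
  [/\ forall e, e \in E -> is_edge e, connected_es E & ~ has_cycle E].

Definition diam_le (E : {set {set T}}) (k : nat) : Prop :=
  forall u v : T, dist_le E k u v.
End Graphs.

Section GeoGraph.
Variables (R : realType) (T : finType) (p : T -> (R * R)%type).

Definition general_position : Prop :=
  injective p /\
  forall x y z : T, x != y -> y != z -> x != z -> orient (p x) (p y) (p z) != 0.

Definition edges_cross (e f : {set T}) : Prop :=
  exists x y z w : T, [/\ e = [set x; y], f = [set z; w],
    [disjoint e & f] & seg_meet (p x) (p y) (p z) (p w)].

Definition simple_tree_diam_le (k : nat) (E : {set {set T}}) : Prop :=
  [/\ spanning_tree E, diam_le E k &
      forall e f, e \in E -> f \in E -> ~ edges_cross e f].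

Definition blocks (F : {set {set T}} -> Prop) (B : {set {set T}}) : Prop :=
  forall E, F E -> exists2 e, e \in B & e \in E.

Definition blocker (F : {set {set T}} -> Prop) (B : {set {set T}}) : Prop :=
  [/\ forall e, e \in B -> is_edge e, blocks F B &
      forall B' : {set {set T}}, (forall e, e \in B' -> is_edge e) -> blocks F B' ->
                 (#|B| <= #|B'|)%N].

Definition degree (B : {set {set T}}) (a : T) : nat := #|[set e in B | a \in e]|.
End GeoGraph.

From HB Require Import structures.
From mathcomp Require Import all_boot all_order all_algebra.
From mathcomp Require Import reals trigo.
From mathcomp Require Import ring lra.
Set Implicit Arguments. Unset Strict Implicit. Unset Printing Implicit Defensive.
Import Order.TTheory GRing.Theory Num.Theory.

Local Open Scope ring_scope.

(* The star centred at [a] over all vertices other than [b], completed by the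
   edge [b,c], is a spanning tree of diameter at most 3.  It is non-crossing:
   if a segment [a,t] crossed [b,c], then [t] would lie on the same side of
   l(a,b) as [c] and the angle abt would exceed abc.  Hence the blocker [B]
   contains one of its edges, and since [a,b] is the only edge of [B] at the
   leaf [a], that edge is [b,c]. *)

Section Angles.
Variable R : realType.
Notation pt := (R * R)%type.
Implicit Types (d h k x y : R) (u v w z : pt).

Definition cross u v : R := u.1 * v.2 - u.2 * v.1.

(* The cosine of the angle between two vectors with dot product [d] and cross
   product [h]. *)
Definition cos_ratio d h : R := d / Num.sqrt (d ^+ 2 + h ^+ 2).

Lemma cos_ratio_den_gt0 d h : h != 0 -> 0 < Num.sqrt (d ^+ 2 + h ^+ 2).
Proof.
move=> h0; rewrite sqrtr_gt0 ltr_pwDr ?sqr_ge0 //.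
by rewrite exprn_even_gt0.
Qed.

Lemma cos_ratio_bound d h : h != 0 -> -1 <= cos_ratio d h <= 1.
Proof.
move=> h0; have h2 : 0 < h ^+ 2 by rewrite exprn_even_gt0.
have s2 : Num.sqrt (d ^+ 2 + h ^+ 2) ^+ 2 = d ^+ 2 + h ^+ 2.
  by rewrite sqr_sqrtr // addr_ge0 ?sqr_ge0.
have := cos_ratio_den_gt0 d h0.
rewrite /cos_ratio; set s := Num.sqrt _ in s2 * => s0.
rewrite ler_pdivlMr // ler_pdivrMr //; apply/andP; split; nra.
Qed.

Lemma cos_ratioN d h : cos_ratio (- d) h = - cos_ratio d h.
Proof. by rewrite /cos_ratio sqrrN mulNr. Qed.

Lemma cos_ratio_lt_nonneg x y h :
  h != 0 -> 0 <= x -> x < y -> cos_ratio x h < cos_ratio y h.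
Proof.
move=> h0 x0 xy; have h2 : 0 < h ^+ 2 by rewrite exprn_even_gt0.
have := cos_ratio_den_gt0 x h0; have := cos_ratio_den_gt0 y h0.
set r := Num.sqrt (y ^+ 2 + _); set s := Num.sqrt (x ^+ 2 + _) => r0 s0.
have r2 : r ^+ 2 = y ^+ 2 + h ^+ 2 by rewrite sqr_sqrtr // addr_ge0 ?sqr_ge0.
have s2 : s ^+ 2 = x ^+ 2 + h ^+ 2 by rewrite sqr_sqrtr // addr_ge0 ?sqr_ge0.
have sq_lt : (x * r) ^+ 2 < (y * s) ^+ 2.
  rewrite !exprMn r2 s2 -subr_gt0.
  have -> : y ^+ 2 * (x ^+ 2 + h ^+ 2) - x ^+ 2 * (y ^+ 2 + h ^+ 2) =
            (y ^+ 2 - x ^+ 2) * h ^+ 2 by ring.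
  by rewrite mulr_gt0 // subr_gt0; nra.
rewrite /cos_ratio -/r -/s ltr_pdivrMr // mulrAC ltr_pdivlMr //.
have : 0 <= x * r by rewrite mulr_ge0 // ltW.
have : 0 < y * s by rewrite mulr_gt0 //; lra.
nra.
Qed.

Lemma cos_ratio_lt x y h : h != 0 -> x < y -> cos_ratio x h < cos_ratio y h.
Proof.
move=> h0 xy; have [x0|x0] := leP 0 x; first exact: cos_ratio_lt_nonneg.
have [y0|y0] := leP y 0.
  by rewrite -ltrN2 -!cos_ratioN cos_ratio_lt_nonneg // ?oppr_ge0 // ltrN2.
have den_gt0 d : 0 < Num.sqrt (d ^+ 2 + h ^+ 2) := cos_ratio_den_gt0 d h0.
have : cos_ratio x h < 0 by rewrite /cos_ratio pmulr_llt0 ?invr_gt0.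
have : 0 < cos_ratio y h by rewrite /cos_ratio divr_gt0.
lra.
Qed.

Lemma cos_ratioZ k d h : 0 < k -> cos_ratio (k * d) (k * h) = cos_ratio d h.
Proof.
move=> k0; rewrite /cos_ratio !exprMn -mulrDr sqrtrM ?sqr_ge0 // sqrtr_sqr.
by rewrite gtr0_norm // invfM mulrACA mulfV ?mul1r // gt_eqF.
Qed.

Lemma ltr_acos x y : -1 <= x <= 1 -> -1 <= y <= 1 -> x < y -> acos y < acos x.
Proof.
move=> hx hy xy.
have ix : acos x \in `[0, pi] by rewrite in_itv /= acos_ge0 // acos_lepi.
have iy : acos y \in `[0, pi] by rewrite in_itv /= acos_ge0 // acos_lepi.
by rewrite -(ltr_cos iy ix) !acosK // in_itv.
Qed.

(* By Lagrange's identity |z|^2 |v|^2 = (z . v)^2 + (z x v)^2. *)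
Lemma angle_cos_ratio a b t :
  angle a b t = acos (cos_ratio (dot (vsub a b) (vsub t b)) (cross (vsub a b) (vsub t b))).
Proof.
rewrite /angle /vnorm /cos_ratio -sqrtrM; last by rewrite /dot addr_ge0 // -expr2 sqr_ge0.
by congr (acos (_ / Num.sqrt _)); rewrite /dot /cross /=; ring.
Qed.

End Angles.

Section Segments.
Variable R : realType.
Notation pt := (R * R)%type.
Implicit Types (a b c t : pt) (l u : R).

Definition lerp l a t : pt := ((1 - l) * a.1 + l * t.1, (1 - l) * a.2 + l * t.2).

Lemma seg_meetP a t b c :
  seg_meet a t b c <->
  exists l u, [/\ 0 <= l <= 1, 0 <= u <= 1 & lerp l a t = lerp u b c].
Proof.
split=> [[l [u [l01 u01 [E1 E2]]]]|[l [u [l01 u01 [E1 E2]]]]]; exists l, u => //.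
by split=> //; rewrite /lerp E1 E2.
Qed.

Lemma orient_lerp a b c t l :
  orient a b (lerp l c t) = (1 - l) * orient a b c + l * orient a b t.
Proof. by rewrite /orient /lerp /=; ring. Qed.

Lemma orient_lerp_line a b l : orient a b (lerp l a b) = 0.
Proof. by rewrite /orient /lerp /=; ring. Qed.

Lemma orientC a b c : orient a b c = orient b c a.
Proof. by rewrite /orient; ring. Qed.

Lemma seg_meetC a t b c : seg_meet a t b c -> seg_meet b c a t.
Proof. by move=> [l [u [l01 u01 [E1 E2]]]]; exists u, l. Qed.

Lemma lerp_rev a t l : lerp (1 - l) t a = lerp l a t.
Proof. by rewrite /lerp; congr pair; ring. Qed.

Lemma seg_meet_revl a t b c : seg_meet a t b c -> seg_meet t a b c.
Proof.
move=> /seg_meetP[l [u [/andP[l0 l1] u01 E]]]; apply/seg_meetP.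
by exists (1 - l), u; rewrite lerp_rev; split=> //; apply/andP; split; lra.
Qed.

Lemma seg_meet_revr a t b c : seg_meet a t b c -> seg_meet a t c b.
Proof. by move=> /seg_meetC/seg_meet_revl/seg_meetC. Qed.

Lemma seg_meet_interior a t b c :
  seg_meet a t b c -> orient b c a != 0 -> orient b c t != 0 -> orient a t b != 0 ->
  exists l u, [/\ 0 < l < 1, 0 < u & lerp l a t = lerp u b c].
Proof.
move=> /seg_meetP[l [u [/andP[l0 l1] /andP[u0 _] E]]] bca bct atb.
have on_bc : (1 - l) * orient b c a + l * orient b c t = 0.
  by rewrite -orient_lerp E orient_lerp_line.
have on_at : (1 - u) * orient a t b + u * orient a t c = 0.
  by rewrite -orient_lerp -E orient_lerp_line.
have l_gt0 : 0 < l.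
  rewrite lt0r l0 andbT; apply: contraNneq bca => l_eq0.
  by move: on_bc; rewrite l_eq0 subr0 mul1r mul0r addr0 => ->.
have l_lt1 : l < 1.
  rewrite lt_neqAle l1 andbT; apply: contraNneq bct => l_eq1.
  by move: on_bc; rewrite l_eq1 subrr mul0r mul1r add0r => ->.
have u_gt0 : 0 < u.
  rewrite lt0r u0 andbT; apply: contraNneq atb => u_eq0.
  by move: on_at; rewrite u_eq0 subr0 mul1r mul0r addr0 => ->.
by exists l, u; rewrite l_gt0 l_lt1.
Qed.

Lemma angle_lt_lerp a b c t l u :
  0 < l < 1 -> 0 < u -> orient a b c != 0 -> lerp l a t = lerp u b c ->
  l * orient a b t = u * orient a b c /\ angle a b c < angle a b t.
Proof.
move=> /andP[l_gt0 l_lt1] u_gt0 abc [E1 E2].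
set z := vsub a b; set v := vsub t b; set w := vsub c b.
have shift1 : l * v.1 = u * w.1 - (1 - l) * z.1 by rewrite /=; lra.
have shift2 : l * v.2 = u * w.2 - (1 - l) * z.2 by rewrite /=; lra.
have cross_shift : l * cross z v = u * cross z w.
  have -> : l * cross z v = z.1 * (l * v.2) - z.2 * (l * v.1) by rewrite /cross; ring.
  by rewrite shift1 shift2 /cross; ring.
have dot_shift : l * dot z v = u * dot z w - (1 - l) * dot z z.
  have -> : l * dot z v = z.1 * (l * v.1) + z.2 * (l * v.2) by rewrite /dot; ring.
  by rewrite shift1 shift2 /dot; ring.
have orient_cross p : orient a b p = - cross z (vsub p b) by rewrite /orient /cross /=; ring.
have zw0 : cross z w != 0 by rewrite -oppr_eq0 -orient_cross.
have zv0 : cross z v != 0.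
  have := mulf_neq0 (lt0r_neq0 u_gt0) zw0.
  by rewrite -cross_shift mulf_eq0 negb_or => /andP[].
have zz : 0 < dot z z.
  rewrite lt0r /dot -!expr2 addr_ge0 ?sqr_ge0 // andbT paddr_eq0 ?sqr_ge0 // !sqrf_eq0.
  by apply: contraNN zw0 => /andP[/eqP z1 /eqP z2]; rewrite /cross z1 z2 !mul0r subrr.
split; first by rewrite !orient_cross !mulrN cross_shift.
rewrite !angle_cos_ratio -/z -/v -/w; apply: ltr_acos; rewrite ?cos_ratio_bound //.
rewrite -(cos_ratioZ _ _ l_gt0) -[X in _ < X](cos_ratioZ _ _ u_gt0) cross_shift dot_shift.
apply: cos_ratio_lt; first exact: mulf_neq0 (lt0r_neq0 u_gt0) zw0.
by rewrite gtrBl mulr_gt0 // subr_gt0.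
Qed.

Lemma seg_meet_angle_lt a b c t :
  seg_meet a t b c -> orient a b c != 0 -> orient b c t != 0 -> orient a t b != 0 ->
  0 < orient a b t * orient a b c /\ angle a b c < angle a b t.
Proof.
move=> abtc abc bct atb; have bca : orient b c a != 0 by rewrite -orientC.
have [l [u [l01 u_gt0 E]]] := seg_meet_interior abtc bca bct atb.
have [side lt_angle] := angle_lt_lerp l01 u_gt0 abc E.
split=> //; case/andP: l01 => l_gt0 _.
rewrite -(pmulr_rgt0 _ l_gt0) mulrA side -mulrA mulr_gt0 //.
by rewrite -expr2 exprn_even_gt0.
Qed.
End Segments.

Section Trees.
Variable T : finType.
Implicit Types (E : {set {set T}}) (u v w : T).

Lemma set2_eq x y u v :
  [set x; y] = [set u; v] -> (x = u /\ y = v) \/ (x = v /\ y = u).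
Proof.
move=> E.
have : x \in [set u; v] by rewrite -E set21.
have : y \in [set u; v] by rewrite -E set22.
have : u \in [set x; y] by rewrite E set21.
have : v \in [set x; y] by rewrite E set22.
by move=> /set2P[] ? /set2P[] ? /set2P[] ? /set2P[] ?; subst; by [left | right].
Qed.

Lemma adjC E : symmetric (adj E).
Proof. by move=> u v; rewrite /adj setUC. Qed.

Lemma dist_leW E m n u v : (m <= n)%N -> dist_le E m u v -> dist_le E n u v.
Proof. by move=> mn [s [sz ps]]; exists s; rewrite (leq_trans sz mn). Qed.

Lemma dist_le_trans E m n u v w :
  dist_le E m u v -> dist_le E n v w -> dist_le E (m + n) u w.
Proof.
move=> [s [sz [ps ls]]] [s' [sz' [ps' ls']]]; exists (s ++ s').
by rewrite size_cat leq_add // cat_path last_cat ls ps ps'.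
Qed.

Lemma dist_le_sym E k u v : dist_le E k u v -> dist_le E k v u.
Proof.
move=> [s [sz [ps <-]]]; exists (rev (belast u s)); split; [|split].
- by rewrite size_rev size_belast.
- by rewrite rev_path (eq_path (fun x y => adjC E y x)).
- by elim/last_ind: s {sz ps} => //= s y _; rewrite belast_rcons rev_cons last_rcons.
Qed.

Lemma cycle_mid (r : rel T) (P : pred T) p :
  cycle r p -> uniq p -> (3 <= size p)%N ->
  (forall u y w, r u y -> r y w -> u != w -> P y) -> all P p.
Proof.
move=> cyc up sz mid; apply/allP => y /rot_to[i q def].
have : cycle r (rot i p) by rewrite rot_cycle.
have : (3 <= size (rot i p))%N by rewrite size_rot.
have : uniq (rot i p) by rewrite rot_uniq.
rewrite def; case: q {def} => [|z [|w q]] // uy _.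
have zq : z \notin w :: q.
  by move: uy; rewrite /= => /and3P[].
rewrite /= rcons_path => /and3P[ryz _ /andP[_ rly]].
by apply: mid rly ryz _; apply: contraNneq zq => <-; apply: mem_last.
Qed.

Definition edges_of (r : rel T) : {set {set T}} :=
  [set e | [exists u, exists v, (e == [set u; v]) && r u v]].

Lemma edges_ofP (r : rel T) e :
  reflect (exists u v, e = [set u; v] /\ r u v) (e \in edges_of r).
Proof.
rewrite inE; apply: (iffP existsP) => [[u /existsP[v /andP[/eqP -> ruv]]]|[u [v [-> ruv]]]].
  by exists u, v.
by exists u; apply/existsP; exists v; rewrite eqxx.
Qed.

Lemma adj_edges_of (r : rel T) : symmetric r -> adj (edges_of r) =2 r.
Proof.
move=> rC u v; apply/edges_ofP/idP => [[x [y [/set2_eq[] [-> ->] //]]]|ruv].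
  by rewrite rC.
by exists u, v.
Qed.

Lemma edges_of_is_edge (r : rel T) e : irreflexive r -> e \in edges_of r -> is_edge e.
Proof.
move=> r_irr /edges_ofP[u [v [-> ruv]]].
have uv : u != v by apply: contraTneq ruv => ->; rewrite r_irr.
by rewrite /is_edge cards2 uv.
Qed.

Section Fan.
Variables a b c : T.
Hypotheses (ca : c != a) (cb : c != b).

Definition fan_arc u v := (u == a) && (v != a) && (v != b) || (u == b) && (v == c).
Definition fan_rel u v := fan_arc u v || fan_arc v u.
Definition fan_tree := edges_of fan_rel.

Lemma fan_relC : symmetric fan_rel.
Proof. by move=> u v; rewrite /fan_rel orbC. Qed.

Let adj_fan := adj_edges_of fan_relC.

Lemma fan_rel_irr : irreflexive fan_rel.
Proof.
move=> u; rewrite /fan_rel orbb /fan_arc andbN /=.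
apply/negbTE/negP => /andP[/eqP -> /eqP bc].
by move: cb; rewrite bc eqxx.
Qed.

Lemma mem_fan_tree e : e \in fan_tree ->
  (exists2 t, (t != a) && (t != b) & e = [set a; t]) \/ e = [set b; c].
Proof.
case/edges_ofP => u [v [->]]; rewrite /fan_rel /fan_arc.
case/orP => /orP[/andP[/andP[/eqP -> va] vb]|/andP[/eqP -> /eqP ->]].
- by left; exists v; rewrite ?va.
- by right.
- by left; exists u; [rewrite va vb | rewrite setUC].
- by right; rewrite setUC.
Qed.

Lemma fan_rel_mid u y w : fan_rel u y -> fan_rel y w -> u != w -> (y == a) || (y == c).
Proof.
have [//|ya] := eqVneq y a; have [//|yc] := eqVneq y c.
rewrite /fan_rel /fan_arc (negbTE ya) (negbTE yc) /= !andbT.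
by case: (y =P b) => _; rewrite /= ?andbF ?andbT ?orbF => /eqP -> /eqP ->; rewrite eqxx.
Qed.

Lemma fan_tree_acyclic : ~ has_cycle fan_tree.
Proof.
move=> [x [s [us sz ps lx]]].
have cyc : cycle (adj fan_tree) (x :: s) by rewrite /= rcons_path ps lx.
have mid u y w : adj fan_tree u y -> adj fan_tree y w -> u != w -> y \in [:: a; c].
  by rewrite !adj_fan !inE; exact: fan_rel_mid.
have /allP sub := cycle_mid cyc us sz mid.
suff : (size (x :: s) <= size [:: a; c])%N by rewrite /= ltnS leqNgt sz.
exact: uniq_leq_size us sub.
Qed.

Lemma dist_le_fan_center u : dist_le fan_tree (1 + (u == b)) u a.
Proof.
case: (u =P a) => [->|/eqP ua]; first by exists [::].
case: (u =P b) => [->|/eqP ub].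
  exists [:: c; a]; rewrite /= !adj_fan /fan_rel /fan_arc !eqxx ca cb /=.
  by split=> //; rewrite !orbT.
by exists [:: a]; rewrite /= adj_fan /fan_rel /fan_arc !eqxx ua ub /= orbT.
Qed.

Lemma fan_tree_diam : diam_le fan_tree 3.
Proof.
move=> u v; have [<-|uv] := eqVneq u v; first by exists [::].
apply: dist_leW (dist_le_trans (dist_le_fan_center u) (dist_le_sym (dist_le_fan_center v))).
by case: (u =P b) (v =P b) uv => [->|_] [->|_]; rewrite ?eqxx.
Qed.

Lemma fan_tree_spanning : spanning_tree fan_tree.
Proof.
split=> [e|u v|]; first exact/edges_of_is_edge/fan_rel_irr.
  by have [s [_ ?]] := fan_tree_diam u v; exists s.
exact: fan_tree_acyclic.
Qed.
End Fan.

Lemma degree1_edge (B : {set {set T}}) a b e :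
  degree B a = 1%N -> [set a; b] \in B -> e \in B -> a \in e -> e = [set a; b].
Proof.
move=> /eqP/cards1P[f Bf] abB eB ae.
have : e \in [set f] by rewrite -Bf inE eB ae.
have : [set a; b] \in [set f] by rewrite -Bf inE abB set21.
by rewrite !inE => /eqP -> /eqP ->.
Qed.
End Trees.

Section Crossings.
Variables (R : realType) (T : finType) (p : T -> (R * R)%type).

Lemma edges_cross_disjoint e f : edges_cross p e f -> [disjoint e & f].
Proof. by case=> x [y [z [w []]]]. Qed.

Lemma edges_cross_set2 x y z w :
  edges_cross p [set x; y] [set z; w] -> seg_meet (p x) (p y) (p z) (p w).
Proof.
case=> x' [y' [z' [w' [/set2_eq exy /set2_eq ezw _ meet]]]].
by case: exy ezw => -[-> ->] [[-> ->]|[-> ->]];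
  by [ | exact: seg_meet_revl | exact: seg_meet_revr | exact/seg_meet_revl/seg_meet_revr].
Qed.

Lemma fan_tree_noncrossing a b c :
  c != a -> c != b ->
  (forall t, t != a -> t != b -> t != c -> ~ seg_meet (p a) (p t) (p b) (p c)) ->
  forall e f, e \in fan_tree a b c -> f \in fan_tree a b c -> ~ edges_cross p e f.
Proof.
move=> ca cb no_meet e f eT fT cross; have disj := edges_cross_disjoint cross.
have ne_c t : [disjoint [set a; t] & [set b; c]] -> t != c.
  by apply: contraTneq => ->; apply/negP => /disjointFr/(_ (set22 a c)); rewrite set22.
case: (mem_fan_tree eT) (mem_fan_tree fT) => [[t /andP[ta tb] Ee]|Ee] [[t' /andP[ta' tb'] Ef]|Ef];
  rewrite {}Ee {}Ef in cross disj.
- by move: (disjointFr disj (set21 a t)); rewrite set21.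
- exact: no_meet ta tb (ne_c t disj) (edges_cross_set2 cross).
- rewrite disjoint_sym in disj.
  exact: no_meet ta' tb' (ne_c t' disj) (seg_meetC (edges_cross_set2 cross)).
- by move: (disjointFr disj (set21 b c)); rewrite set21.
Qed.
End Crossings.

Theorem mainTheorem9 (R : realType) (T : finType) (p : T -> (R * R)%type)
  (B : {set {set T}}) (a b : T) (side : bool) (c : T) :
  general_position p ->
  blocker (simple_tree_diam_le p 3) B ->
  degree B a = 1%N ->
  [set a; b] \in B ->
  (if side then 0 < orient (p a) (p b) (p c) else orient (p a) (p b) (p c) < 0) ->
  (forall c' : T,
     (if side then 0 < orient (p a) (p b) (p c') else orient (p a) (p b) (p c') < 0) ->
     angle (p a) (p b) (p c') <= angle (p a) (p b) (p c)) ->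
  [set b; c] \in B.
Proof.
move=> [_ gp] [_ blocksB _] degB abB side_c max_c.
have abc : orient (p a) (p b) (p c) != 0.
  by case: {+}side in side_c *; [rewrite gt_eqF | rewrite lt_eqF].
have ca : c != a by apply: contraNneq abc => ->; apply/eqP; rewrite /orient; ring.
have cb : c != b by apply: contraNneq abc => ->; apply/eqP; rewrite /orient; ring.
have ab : a != b by apply: contraNneq abc => ->; apply/eqP; rewrite /orient; ring.
have no_meet t : t != a -> t != b -> t != c -> ~ seg_meet (p a) (p t) (p b) (p c).
  move=> ta tb tc meet.
  have bct : orient (p b) (p c) (p t) != 0 by apply: gp; rewrite // eq_sym.
  have atb : orient (p a) (p t) (p b) != 0 by apply: gp; rewrite // eq_sym.
  have [same_side lt_angle] := seg_meet_angle_lt meet abc bct atb.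
  have side_t : if side then 0 < orient (p a) (p b) (p t) else orient (p a) (p b) (p t) < 0.
    by case: {+}side in side_c *; nra.
  by have := max_c t side_t; lra.
have tree : simple_tree_diam_le p 3 (fan_tree a b c).
  by split; [exact: fan_tree_spanning | exact: fan_tree_diam | exact: fan_tree_noncrossing].
have [e eB eT] := blocksB _ tree.
case: (mem_fan_tree eT) eB => [[t /andP[_ tb] ->] atB|-> //].
have /set2_eq[[_ tb'] | [ab' _]] := degree1_edge degB abB atB (set21 a t).
- by rewrite tb' eqxx in tb.
- by rewrite ab' eqxx in ab.
Qed.
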